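(* Let $G$ be a symmetric diagonal game. Then the Rawlsian equilibria, Bentham-Hars\'anyi equilibria, best-off equilibria, Rawlsian percentile equilibria and aspiration equilibria of $G$ each coincide with the convex combinations (probability distributions) of pure Kantian equilibria of $G$.
   Context: All $n$ players have the same finite action set $A$. The game is symmetric if for every player $i$, every pure profile $(x_1,\ldots,x_n)$ and every permutation $\sigma$ of $\{1,\ldots,n\}$, $u_{\sigma(i)}(x_1,\ldots,x_n)=u_i(x_{\sigma(1)},\ldots,x_{\sigma(n)})$. The diagonal is the set of profiles $(a,\ldots,a)$. For vectors, $x$ dominates $y$ if $x_j\ge y_j$ for all $j$, strictly if some inequality is strict; profiles and distributions are compared via their vectors of (expected) player utilities. The game is diagonal if every pure profile is Pareto dominated by some diagonal profile. A pure Kantian equilibrium is a diagonal profile $(a,\ldots,a)$ with $u_i(a,\ldots,a)\ge u_i(b,\ldots,b)$ for every player $i$ and every $b\in A$. A pure profile is Pareto optimal if no pure profile strictly dominates it. The equilibria are probability distributions over pure profiles: Rawlsian: supported on Pareto optimal profiles, maximizing the minimum expected utility over players, and strictly dominated by no other distribution with this property. Bentham-Hars\'anyi: supported on Pareto optimal profiles, maximizing the sum of expected payoffs. Best-off: supported on Pareto optimal profiles, maximizing the largest expected payoff, strictly dominated by no distribution with this property. The percentile index of a pure profile $a$ for player $i$ is the percentage of Pareto optimal profiles giving $i$ a strictly better payoff than $a$; Rawlsian percentile: supported on Pareto optimal profiles, minimizing the largest expected percentile index, strictly dominated by no distribution with this property. The natural expectation point of player $i$ is the median of its payoffs over undominated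 pure profiles (average of the two medians if there are two); $i$ is happy in $a$ if $u_i(a)$ is at least this point, unhappy otherwise; aspiration equilibrium: a distribution minimizing the largest probability of unhappiness among players, strictly dominated by no distribution with this property. *)

From HB Require Import structures.
From mathcomp Require Import all_boot all_order all_algebra all_fingroup.
Set Implicit Arguments. Unset Strict Implicit. Unset Printing Implicit Defensive.
Import Order.TTheory GRing.Theory Num.Theory.
Local Open Scope ring_scope.

(* Minimum / maximum of a family indexed by 'I_m (value 0 if m = 0; the
   theorem assumes at least one player). *)
Definition minI (R : realDomainType) (m : nat) : ('I_m -> R) -> R :=
  match m return ('I_m -> R) -> R with
  | 0 => fun _ => 0
  | k.+1 => fun f => \big[Num.min/ f ord0]_(i < k.+1) f i
  end.
Definition maxI (R : realDomainType) (m : nat) : ('I_m -> R) -> R :=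
  match m return ('I_m -> R) -> R with
  | 0 => fun _ => 0
  | k.+1 => fun f => \big[Num.max/ f ord0]_(i < k.+1) f i
  end.

Definition median (R : realFieldType) (s : seq R) : R :=
  let t := sort <=%R s in
  let m := size t in
  if odd m then nth 0 t m./2
  else (nth 0 t m./2.-1 + nth 0 t m./2) / 2%:R.

Definition profile (n : nat) (A : finType) := {ffun 'I_n -> A}.

Section Game.
Variables (R : realFieldType) (n : nat) (A : finType).
Variable u : 'I_n -> profile n A -> R.

Definition distr := {ffun profile n A -> R}.

Definition dominates (x y : 'I_n -> R) : bool := [forall j, y j <= x j].
Definition sdominates (x y : 'I_n -> R) : bool :=
  dominates x y && [exists j, y j < x j].

Definition uvec (x : profile n A) : 'I_n -> R := fun i => u i x.

Definition symmetric_game : Prop :=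
  forall (i : 'I_n) (x : profile n A) (s : {perm 'I_n}),
    u (s i) x = u i [ffun j => x (s j)].

Definition diag (a : A) : profile n A := [ffun => a].

Definition diagonal_game : Prop :=
  forall x : profile n A, exists a : A, dominates (uvec (diag a)) (uvec x).

Definition kantian (a : A) : Prop :=
  forall (i : 'I_n) (b : A), u i (diag b) <= u i (diag a).

Definition pareto_optimal (x : profile n A) : bool :=
  [forall y : profile n A, ~~ sdominates (uvec y) (uvec x)].

Definition distribution (p : distr) : Prop :=
  (forall x, 0 <= p x) /\ \sum_x p x = 1.

Definition supported_on (P : profile n A -> Prop) (p : distr) : Prop :=
  forall x, p x != 0 -> P x.

Definition EU (p : distr) : 'I_n -> R := fun i => \sum_x p x * u i x.

Definition feasPO (p : distr) : Prop :=
  distribution p /\ supported_on (fun x => pareto_optimal x) p.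

Definition maximizer (F : distr -> Prop) (c : distr -> R) (p : distr) : Prop :=
  F p /\ forall q, F q -> c q <= c p.
Definition minimizer (F : distr -> Prop) (c : distr -> R) (p : distr) : Prop :=
  F p /\ forall q, F q -> c p <= c q.

Definition undominated_in (F : distr -> Prop) (p : distr) : Prop :=
  ~ exists q, F q /\ sdominates (EU q) (EU p).

Definition rawlsian (p : distr) : Prop :=
  let F := maximizer feasPO (fun q => minI (EU q)) in F p /\ undominated_in F p.

Definition bentham_harsanyi (p : distr) : Prop :=
  maximizer feasPO (fun q => \sum_i EU q i) p.

Definition best_off (p : distr) : Prop :=
  let F := maximizer feasPO (fun q => maxI (EU q)) in F p /\ undominated_in F p.

Definition percentile (i : 'I_n) (x : profile n A) : R :=
  100%:R * #|[set y | pareto_optimal y & u i x < u i y]|%:R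
    / #|[set y | pareto_optimal y]|%:R.

Definition EPerc (p : distr) : 'I_n -> R :=
  fun i => \sum_x p x * percentile i x.

Definition rawlsian_percentile (p : distr) : Prop :=
  let F := minimizer feasPO (fun q => maxI (EPerc q)) in F p /\ undominated_in F p.

(* natural expectation point: median of i's payoffs over undominated
   (Pareto optimal) pure profiles, counted with multiplicity *)
Definition nat_expectation (i : 'I_n) : R :=
  median [seq u i x | x <- enum [pred x | pareto_optimal x]].

Definition happy (i : 'I_n) (x : profile n A) : bool := nat_expectation i <= u i x.

Definition Punhappy (p : distr) : 'I_n -> R :=
  fun i => \sum_(x | ~~ happy i x) p x.

Definition aspiration (p : distr) : Prop :=
  let F := minimizer distribution (fun q => maxI (Punhappy q)) in
  F p /\ undominated_in F p.

Definition kantian_combination (p : distr) : Prop :=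
  distribution p /\ supported_on (fun x => exists a, x = diag a /\ kantian a) p.

(* The class E of equilibria coincides with the convex combinations of pure
   Kantian equilibria, distributions being identified via their vectors of
   expected utilities: every Kantian combination is in E, and every member of E
   has the same expected-utility vector as some Kantian combination. *)
Definition coincides_with_kantian (E : distr -> Prop) : Prop :=
  (forall p, kantian_combination p -> E p) /\
  (forall p, E p -> exists q, kantian_combination q /\ forall i, EU p i = EU q i).

End Game.

From mathcomp Require Import all_boot all_order all_algebra all_fingroup.
Set Implicit Arguments. Unset Strict Implicit. Unset Printing Implicit Defensive.
Import Order.TTheory GRing.Theory Num.Theory.
Local Open Scope ring_scope.

(* In a symmetric game all players receive the same payoff at a diagonal
   profile, so there is a best diagonal payoff [vstar], attained at a pure
   Kantian equilibrium, and the Kantian equilibria are exactly the actions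
   whose diagonal profile pays [vstar].  Diagonality bounds every payoff of
   every profile by [vstar]; hence the Pareto optimal profiles are exactly
   those paying [vstar] to everybody.  Consequently every distribution
   supported on Pareto optimal profiles, in particular every convex
   combination of Kantian equilibria, gives every player the expected utility
   [vstar]: all the optimisation criteria are constant on this class, and no
   member of it strictly dominates another.  For aspiration equilibria,
   [vstar] is also the natural expectation point, so being happy means
   getting [vstar], and Kantian combinations make nobody unhappy. *)

Lemma le_maxI (R : realDomainType) m (f : 'I_m -> R) i : f i <= maxI f.
Proof.
case: m f i => [|k] f i; first by case: i.
by rewrite /= (bigD1 i) //= le_max lexx.
Qed.

Lemma maxI_le (R : realDomainType) m (f : 'I_m -> R) c :
  0 <= c -> (forall i, f i <= c) -> maxI f <= c.
Proof.
case: m f => [|k] f c0 fc //=.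
by apply: (big_ind (fun y => y <= c)) => // x y xc yc; rewrite ge_max xc yc.
Qed.

Lemma eq_minI (R : realDomainType) m (f g : 'I_m -> R) : f =1 g -> minI f = minI g.
Proof. by case: m f g => [|k] f g fg //=; rewrite fg; apply: eq_bigr. Qed.

Lemma eq_maxI (R : realDomainType) m (f g : 'I_m -> R) : f =1 g -> maxI f = maxI g.
Proof. by case: m f g => [|k] f g fg //=; rewrite fg; apply: eq_bigr. Qed.

Lemma median_const (R : realFieldType) (s : seq R) c :
  s != [::] -> {in s, forall x, x = c} -> median s = c.
Proof.
move=> s_neq0 s_c; rewrite /median; set t := sort _ s.
have t_gt0 : (0 < size t)%N by rewrite size_sort lt0n size_eq0.
have t_c k : (k < size t)%N -> nth 0 t k = c.
  by move=> kt; apply: s_c; rewrite -(mem_sort <=%R) mem_nth.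
have half_lt : ((size t)./2 < size t)%N by rewrite -divn2 ltn_Pdiv.
case: ifP => _; first exact: t_c.
rewrite !t_c //; last exact: leq_ltn_trans (leq_pred _) half_lt.
by rewrite -mulr2n -[c *+ 2]mulr_natr mulfK // pnatr_eq0.
Qed.

Lemma weighted_sum_const (R : pzRingType) (T : finType) (q f : T -> R) c :
  \sum_x q x = 1 -> (forall x, q x != 0 -> f x = c) -> \sum_x q x * f x = c.
Proof.
move=> q1 fc; rewrite -[RHS]mul1r -q1 mulr_suml; apply: eq_bigr => x _.
by have [->|/fc ->] := eqVneq (q x) 0; rewrite ?mul0r.
Qed.

Lemma eq_not_sdominates (R : realFieldType) n (x y : 'I_n -> R) :
  x =1 y -> ~~ sdominates x y.
Proof.
by move=> xy; rewrite negb_and; apply/orP; right; apply/existsPn => j; rewrite xy ltxx.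
Qed.

Lemma distribution_inhabited (R : realFieldType) n (A : finType) (p : distr R n A) :
  (0 < n)%N -> distribution p -> inhabited A.
Proof.
move=> n_gt0 [_ p1]; have [x _|no_profile] := pickP (@predT (profile n A)).
  exact: inhabits (x (Ordinal n_gt0)).
by move: p1; rewrite big_pred0 // => /eqP; rewrite eq_sym oner_eq0.
Qed.

Section SymmetricDiagonalGame.
Variables (R : realFieldType) (n : nat) (A : finType).
Variable u : 'I_n -> profile n A -> R.
Hypothesis n_gt0 : (0 < n)%N.
Hypothesis u_sym : symmetric_game u.
Hypothesis u_diag : diagonal_game u.
Variable a0 : A.

Let i0 : 'I_n := Ordinal n_gt0.

Lemma diag_payoff_eq a i j : u i (diag n a) = u j (diag n a).
Proof.
rewrite -[in RHS](tpermL i j) u_sym; congr (u i _).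
by apply/ffunP => k; rewrite !ffunE.
Qed.

Definition astar : A := [arg max_(a > a0) u i0 (diag n a)]%O.

Definition vstar : R := u i0 (diag n astar).

Lemma diag_payoff_le_vstar a i : u i (diag n a) <= vstar.
Proof.
rewrite (diag_payoff_eq a i i0) /vstar /astar.
by case: arg_maxP => // b _; apply.
Qed.

Lemma payoff_le_vstar x i : u i x <= vstar.
Proof.
have [a /forallP ax] := u_diag x.
exact: le_trans (ax i) (diag_payoff_le_vstar a i).
Qed.

Lemma diag_astar_vstar i : u i (diag n astar) = vstar.
Proof. exact: diag_payoff_eq. Qed.

Lemma kantian_astar : kantian u astar.
Proof. by move=> i b; rewrite diag_astar_vstar diag_payoff_le_vstar. Qed.

Lemma kantian_payoff a i : kantian u a -> u i (diag n a) = vstar.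
Proof.
move=> Ka; apply/le_anti; rewrite diag_payoff_le_vstar -(diag_astar_vstar i).
exact: Ka.
Qed.

Lemma pareto_optimalP x : reflect (forall i, u i x = vstar) (pareto_optimal u x).
Proof.
apply: (iffP forallP) => [PO i | x_vstar y].
  have := PO (diag n astar); rewrite /sdominates negb_and => /orP [/negP []|].
    by apply/forallP => j; rewrite /uvec diag_astar_vstar payoff_le_vstar.
  move/existsPn/(_ i); rewrite /uvec diag_astar_vstar -leNgt => vstar_le.
  by apply/le_anti; rewrite payoff_le_vstar.
rewrite negb_and; apply/orP; right; apply/existsPn => j.
by rewrite /uvec x_vstar -leNgt payoff_le_vstar.
Qed.

Lemma feasPO_EU q i : feasPO u q -> EU u q i = vstar.
Proof.
move=> [[_ q1] PO_supp]; apply: weighted_sum_const => // x /PO_supp.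
by move/pareto_optimalP.
Qed.

Lemma kantian_combination_feasPO p : kantian_combination u p -> feasPO u p.
Proof.
move=> [Dp K_supp]; split => // x /K_supp [a [-> Ka]].
by apply/pareto_optimalP => i; apply: kantian_payoff.
Qed.

Definition dirac_astar : distr R n A :=
  [ffun x => if x == diag n astar then 1 else 0].

Lemma kantian_combination_dirac_astar : kantian_combination u dirac_astar.
Proof.
split; first split.
- by move=> x; rewrite ffunE; case: ifP.
- rewrite (bigD1 (diag n astar)) //= ffunE eqxx big1 ?addr0 // => x /negbTE x_neq.
  by rewrite ffunE x_neq.
- move=> x; rewrite ffunE; have [-> _|_] := eqVneq x (diag n astar); last by rewrite eqxx.
  by exists astar; split; last exact: kantian_astar.
Qed.

Lemma coincides_with_kantianW (E : distr R n A -> Prop) :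
  (forall p, kantian_combination u p -> E p) ->
  (forall p, E p -> forall i, EU u p i = vstar) ->
  coincides_with_kantian u E.
Proof.
move=> KE E_vstar; split => // p Ep.
exists dirac_astar; split; first exact: kantian_combination_dirac_astar.
move=> i; rewrite E_vstar // feasPO_EU //.
exact/kantian_combination_feasPO/kantian_combination_dirac_astar.
Qed.

Lemma undominated_in_feasPO (F : distr R n A -> Prop) p :
  (forall q, F q -> feasPO u q) -> feasPO u p -> undominated_in u F p.
Proof.
move=> F_PO Fp [q [/F_PO Fq]]; apply/negP/eq_not_sdominates => i.
by rewrite !feasPO_EU.
Qed.

Lemma maximizer_feasPO (c : distr R n A -> R) p :
  (forall q, feasPO u q -> c q = c p) -> feasPO u p -> maximizer (feasPO u) c p.
Proof. by move=> c_const Fp; split=> // q /c_const ->. Qed.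

Lemma minimizer_feasPO (c : distr R n A -> R) p :
  (forall q, feasPO u q -> c q = c p) -> feasPO u p -> minimizer (feasPO u) c p.
Proof. by move=> c_const Fp; split=> // q /c_const ->. Qed.

Lemma rawlsian_kantian : coincides_with_kantian u (rawlsian u).
Proof.
apply: coincides_with_kantianW => [p /kantian_combination_feasPO Fp|p [[Fp _] _] i].
  have Mp : maximizer (feasPO u) (fun q => minI (EU u q)) p.
    by apply: maximizer_feasPO => // q Fq; apply: eq_minI => i; rewrite !feasPO_EU.
  by split=> //; apply: undominated_in_feasPO => // q [].
exact: feasPO_EU.
Qed.

Lemma bentham_harsanyi_kantian : coincides_with_kantian u (bentham_harsanyi u).
Proof.
apply: coincides_with_kantianW => [p /kantian_combination_feasPO Fp|p [Fp _] i].
  by apply: maximizer_feasPO => // q Fq; apply: eq_bigr => i _; rewrite !feasPO_EU.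
exact: feasPO_EU.
Qed.

Lemma best_off_kantian : coincides_with_kantian u (best_off u).
Proof.
apply: coincides_with_kantianW => [p /kantian_combination_feasPO Fp|p [[Fp _] _] i].
  have Mp : maximizer (feasPO u) (fun q => maxI (EU u q)) p.
    by apply: maximizer_feasPO => // q Fq; apply: eq_maxI => i; rewrite !feasPO_EU.
  by split=> //; apply: undominated_in_feasPO => // q [].
exact: feasPO_EU.
Qed.

Lemma percentile_pareto_optimal i x : pareto_optimal u x -> percentile u i x = 0.
Proof.
move/pareto_optimalP => x_vstar; rewrite /percentile.
suff -> : [set y | pareto_optimal u y & u i x < u i y] = set0.
  by rewrite cards0 mulr0 mul0r.
by apply/setP => y; rewrite !inE x_vstar ltNge payoff_le_vstar andbF.
Qed.

Lemma feasPO_EPerc q i : feasPO u q -> EPerc u q i = 0.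
Proof.
move=> [_ PO_supp]; rewrite /EPerc big1 // => x _.
have [->|/PO_supp/percentile_pareto_optimal ->] := eqVneq (q x) 0.
  by rewrite mul0r.
by rewrite mulr0.
Qed.

Lemma rawlsian_percentile_kantian : coincides_with_kantian u (rawlsian_percentile u).
Proof.
apply: coincides_with_kantianW => [p /kantian_combination_feasPO Fp|p [[Fp _] _] i].
  have Mp : minimizer (feasPO u) (fun q => maxI (EPerc u q)) p.
    by apply: minimizer_feasPO => // q Fq; apply: eq_maxI => i; rewrite !feasPO_EPerc.
  by split=> //; apply: undominated_in_feasPO => // q [].
exact: feasPO_EU.
Qed.

Lemma nat_expectation_vstar i : nat_expectation u i = vstar.
Proof.
apply: median_const => [|y /mapP [x]]; last first.
  by rewrite mem_enum => /pareto_optimalP x_vstar ->.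
rewrite -size_eq0 -lt0n size_map -cardE; apply/card_gt0P; exists (diag n astar).
by rewrite inE; apply/pareto_optimalP => i'; apply: diag_astar_vstar.
Qed.

Lemma happyE i x : happy u i x = (u i x == vstar).
Proof. by rewrite /happy nat_expectation_vstar eq_le payoff_le_vstar. Qed.

Lemma Punhappy_ge0 q i : distribution q -> 0 <= Punhappy u q i.
Proof. by move=> [q_ge0 _]; apply: sumr_ge0. Qed.

Lemma kantian_combination_Punhappy p :
  kantian_combination u p -> maxI (Punhappy u p) <= 0.
Proof.
move=> Kp; apply: maxI_le => // i; rewrite /Punhappy big1 // => x.
have [//|/(kantian_combination_feasPO Kp).2/pareto_optimalP x_vstar] := eqVneq (p x) 0.
by rewrite happyE x_vstar eqxx.
Qed.

Lemma Punhappy_EU q i : distribution q -> maxI (Punhappy u q) <= 0 -> EU u q i = vstar.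
Proof.
move=> Dq unhappy_le0; apply: weighted_sum_const => [|x qx_neq0]; first exact: Dq.2.
apply/eqP; rewrite -happyE; apply: contraNT qx_neq0 => unhappy_x.
have unhappy0 : Punhappy u q i = 0.
  by apply/le_anti; rewrite Punhappy_ge0 // andbT (le_trans (le_maxI _ i)).
by apply/eqP; apply: (psumr_eq0P _ unhappy0) => // y _; apply: Dq.1.
Qed.

Let unhappy_minimizer := minimizer (@distribution R n A) (fun q => maxI (Punhappy u q)).

Lemma unhappy_minimizer_le0 q : unhappy_minimizer q -> maxI (Punhappy u q) <= 0.
Proof.
move=> [_ q_min]; have K := kantian_combination_dirac_astar.
exact: le_trans (q_min _ (kantian_combination_feasPO K).1) (kantian_combination_Punhappy K).
Qed.

Lemma kantian_combination_unhappy_minimizer p :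
  kantian_combination u p -> unhappy_minimizer p.
Proof.
move=> Kp; split=> [|q Dq]; first exact: (kantian_combination_feasPO Kp).1.
apply: le_trans (kantian_combination_Punhappy Kp) _.
exact: le_trans (Punhappy_ge0 i0 Dq) (le_maxI _ i0).
Qed.

Lemma aspiration_kantian : coincides_with_kantian u (aspiration u).
Proof.
apply: coincides_with_kantianW => [p Kp|p [Mp _] i]; last first.
  exact: Punhappy_EU i Mp.1 (unhappy_minimizer_le0 Mp).
split=> [|[q [Mq]]]; first exact: kantian_combination_unhappy_minimizer.
apply/negP/eq_not_sdominates => i.
rewrite (Punhappy_EU i Mq.1 (unhappy_minimizer_le0 Mq)).
by rewrite (feasPO_EU i (kantian_combination_feasPO Kp)).
Qed.

End SymmetricDiagonalGame.

Lemma coincides_with_kantian_inhabited (R : realFieldType) n (A : finType)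
    (u : 'I_n -> profile n A -> R) (E : distr R n A -> Prop) :
  (0 < n)%N -> (forall p, E p -> distribution p) ->
  (A -> coincides_with_kantian u E) -> coincides_with_kantian u E.
Proof.
move=> n_gt0 E_distr coincide; split=> p Hp.
  by have [a0] := distribution_inhabited n_gt0 Hp.1; apply: (coincide a0).1.
by have [a0] := distribution_inhabited n_gt0 (E_distr p Hp); apply: (coincide a0).2.
Qed.

Theorem theorem7 (R : realFieldType) (n : nat) (A : finType)
    (u : 'I_n -> profile n A -> R) :
  (0 < n)%N -> symmetric_game u -> diagonal_game u ->
  [/\ coincides_with_kantian u (rawlsian u),
      coincides_with_kantian u (bentham_harsanyi u),
      coincides_with_kantian u (best_off u),
      coincides_with_kantian u (rawlsian_percentile u)
    & coincides_with_kantian u (aspiration u)].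
Proof.
move=> n_gt0 u_sym u_diag.
split; apply: coincides_with_kantian_inhabited => //.
- by move=> p [[[[]]]].
- exact: rawlsian_kantian.
- by move=> p [[[]]].
- exact: bentham_harsanyi_kantian.
- by move=> p [[[[]]]].
- exact: best_off_kantian.
- by move=> p [[[[]]]].
- exact: rawlsian_percentile_kantian.
- by move=> p [[]].
- exact: aspiration_kantian.
Qed.
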